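(* Let $N\ge 4$ be a multiple of $4$ and $0\le r_1<\dots<r_N\le 1$. Let $h_1^*$ be the 2-factor of $\mathcal K_N$ consisting of the $N/4$ four-cycles $(r_a,r_{a+N/2},r_{a+1},r_{a+N/2+1})$ for $a=1,3,5,\dots,\frac N2-1$, and let $h_2^*$ be the 2-factor consisting of the $N/4$ four-cycles $(r_a,r_{a+N/2},r_{a-1},r_{a+N/2-1})$ for $a=1,3,\dots,\frac N2-1$, where indices are taken mod $N$ in $\{1,\dots,N\}$ (so for $a=1$ the cycle is $(r_1,r_{N/2+1},r_N,r_{N/2})$). Then $h_1^*$ and $h_2^*$ are exactly the 2-factors of $\mathcal K_N$ having the maximum number of crossing pairs of edges.
   Context: A 2-factor of $\mathcal K_N$ is a spanning subgraph in which each vertex has degree $2$, i.e. a covering of all vertices by vertex-disjoint cycles of length at least $3$; a cycle written $(v_1,\dots,v_m)$ has edges $\{v_i,v_{i+1}\}$ and $\{v_m,v_1\}$. Two edges $\{r_i,r_j\}$, $\{r_k,r_\ell\}$ with $i<j$, $k<\ell$ cross if $i<k<j<\ell$ or $k<i<\ell<j$; the number of crossings of a 2-factor is the number of unordered pairs of its edges that cross. *)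

(* Vertices r_1 < ... < r_N of K_N are identified with their
   indices, 0-indexed: vertex i : 'I_N stands for r_(i+1). *)
From HB Require Import structures.
From mathcomp Require Import all_boot all_order all_algebra.
Set Implicit Arguments. Unset Strict Implicit. Unset Printing Implicit Defensive.

(* An edge of K_N is a 2-element vertex set; a 2-factor is a set of edges of K_N
   in which every vertex lies on exactly 2 edges (a spanning 2-regular simple
   subgraph, i.e. a disjoint union of cycles of length >= 3 covering all vertices). *)
Definition is_edge (N : nat) (e : {set 'I_N}) : bool := #|e| == 2.

Definition two_factor (N : nat) (F : {set {set 'I_N}}) : Prop :=
  (forall e, e \in F -> is_edge e) /\
  (forall v : 'I_N, #|[set e in F | v \in e]| = 2).

Definition cross (N : nat) (e f : {set 'I_N}) : bool :=
  [exists i : 'I_N, exists j : 'I_N, exists k : 'I_N, exists l : 'I_N,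
    [&& e == [set i; j], f == [set k; l], i < j, k < l &
        ((i < k) && (k < j) && (j < l)) || ((k < i) && (i < l) && (l < j))]].

Definition crossings (N : nat) (F : {set {set 'I_N}}) : nat :=
  #|[set P : {set {set 'I_N}} |
      [&& P \subset F, #|P| == 2 & [exists e in P, exists f in P, cross e f]]]|.

Definition nedge (N : nat) (x y : nat) : {set 'I_N} :=
  [set i : 'I_N | (val i == x) || (val i == y)].

Definition cyc4 (N : nat) (x y z w : nat) : {set {set 'I_N}} :=
  [set nedge N x y; nedge N y z; nedge N z w; nedge N w x].

(* h1*: cycles (r_a, r_(a+N/2), r_(a+1), r_(a+N/2+1)), a = 1,3,...,N/2-1;
   0-based with a = 2b+1, b < N/4. *)
Definition h1 (N : nat) : {set {set 'I_N}} :=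
  \bigcup_(b < N %/ 4)
     cyc4 N (2 * b) (2 * b + N %/ 2) (2 * b + 1) (2 * b + N %/ 2 + 1).

(* h2*: cycles (r_a, r_(a+N/2), r_(a-1), r_(a+N/2-1)), indices mod N;
   0-based: (2b, 2b+N/2, (2b-1) mod N, 2b+N/2-1). *)
Definition h2 (N : nat) : {set {set 'I_N}} :=
  \bigcup_(b < N %/ 4)
     cyc4 N (2 * b) (2 * b + N %/ 2) ((2 * b + N - 1) %% N) (2 * b + N %/ 2 - 1).

From HB Require Import structures.
From mathcomp Require Import all_boot all_order all_algebra.
From mathcomp Require Import zify.
Set Implicit Arguments. Unset Strict Implicit. Unset Printing Implicit Defensive.

(* Of the N edges of a 2-factor F, three meet a given edge {x, y} (x < y): the
   edge itself and the second edge at each end, so {x, y} crosses at most N - 3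
   edges.  A crossing edge has one end strictly between x and y and one outside,
   and every vertex lies on two edges, so at most 2 min(y - x - 1, N - 1 - (y - x))
   edges cross {x, y}; this is at most N - 4 unless {x, y} is a diameter,
   y = x + N/2.  As at most N/2 edges are diameters, 2 cr(F) <= N (N - 3) - N/2.
   The 2-factors h1 and h2 (all N/2 diameters, plus the edges from x to
   x + N/2 +- 1 chosen by the parity of x) attain this bound.  Conversely,
   equality forces all diameters and forces every other edge to join some x to
   x + N/2 +- 1; as each vertex has degree two, the sign alternates along the
   vertices, which leaves exactly h1 and h2. *)

Lemma card_sep_sum (T : finType) (A : {set T}) (P : pred T) :
  #|[set x in A | P x]| = \sum_(x in A) (P x : nat).
Proof.
rewrite -sum1_card (eq_bigl (fun x => (x \in A) && P x)) => [|x]; last by rewrite inE.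
by rewrite big_mkcondr /=; apply: eq_bigr => x _; case: (P x).
Qed.

Lemma double_count (X Y : finType) (A : {set X}) (B : {set Y}) (R : X -> Y -> bool) :
  \sum_(x in A) #|[set y in B | R x y]| = \sum_(y in B) #|[set x in A | R x y]|.
Proof.
under eq_bigr do rewrite card_sep_sum.
by rewrite exchange_big /=; apply: eq_bigr => y _; rewrite card_sep_sum.
Qed.

Lemma card_sepC (T : finType) (A : {set T}) (P : pred T) :
  #|A| = #|[set x in A | P x]| + #|[set x in A | ~~ P x]|.
Proof.
rewrite !card_sep_sum -big_split /= -sum1_card.
by apply: eq_bigr => x _; case: (P x).
Qed.

Lemma sum_nat_range n a b : \sum_(0 <= v < n) ((a <= v) && (v < b) : nat) = minn n b - a.
Proof.
elim: n => [|n IH]; first by rewrite big_geq // min0n sub0n.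
by rewrite big_nat_recr //= IH; case: (leqP a n) => h1; case: (ltnP n b) => h2 /=; lia.
Qed.

Lemma card_ord_pred N (P : nat -> bool) : #|[set v : 'I_N | P v]| = \sum_(0 <= v < N) (P v : nat).
Proof.
rewrite (_ : [set v : 'I_N | P v] = [set v in [set: 'I_N] | P v]); last first.
  by apply/setP => v; rewrite !inE.
by rewrite card_sep_sum big_mkord; apply: eq_bigl => v; rewrite inE.
Qed.

(* [val] on ordinals sometimes surfaces as [isSub.val_subdef], which [lia] would
   treat as an atom unrelated to [nat_of_ord]. *)
Ltac fold_ord_val := repeat match goal with
  | H : context [isSub.val_subdef _ ?v] |- _ =>
      change (isSub.val_subdef _ v) with (nat_of_ord v) in H
  | |- context [isSub.val_subdef _ ?v] => change (isSub.val_subdef _ v) with (nat_of_ord v)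
  end.
Ltac olia := fold_ord_val; lia.

Section Edges.
Variable N : nat.
Implicit Types (e f : {set 'I_N}).

Lemma is_edgeP e : is_edge e -> exists i j : 'I_N, i < j /\ e = [set i; j].
Proof.
rewrite /is_edge => /cards2P [x [y [nxy ->]]].
case: (ltngtP x y) => h; first by exists x, y.
  by exists y, x; rewrite setUC.
by move/val_inj: h => h; rewrite h eqxx in nxy.
Qed.

Lemma set2_ltn_inj (i j k l : 'I_N) : i < j -> k < l -> [set i; j] = [set k; l] -> i = k /\ j = l.
Proof.
move=> hij hkl E.
have : i \in [set k; l] by rewrite -E !inE eqxx.
have : j \in [set k; l] by rewrite -E !inE eqxx orbT.
have : k \in [set i; j] by rewrite E !inE eqxx.
rewrite !inE -!val_eqE => /orP[] /eqP h1 /orP[] /eqP h2 /orP[] /eqP h3; split; apply: val_inj; olia.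
Qed.

Lemma set2_edge f (i j : 'I_N) : is_edge f -> i \in f -> j \in f -> i != j -> f = [set i; j].
Proof.
move=> hf hi hj nij; apply/eqP; rewrite eq_sym eqEcard cards2 nij (eqP hf) leqnn andbT.
by apply/subsetP => v; rewrite !inE => /orP[] /eqP ->.
Qed.

Lemma crossP e f : cross e f ->
  exists i j k l : 'I_N, [/\ i < j, k < l, e = [set i; j], f = [set k; l] &
     ((i < k) && (k < j) && (j < l)) || ((k < i) && (i < l) && (l < j))].
Proof.
case/existsP => i /existsP[j /existsP[k /existsP[l /and5P[/eqP E1 /eqP E2 h1 h2 h3]]]].
by exists i, j, k, l.
Qed.

Lemma crossE (i j k l : 'I_N) : i < j -> k < l ->
  cross [set i; j] [set k; l] =
  ((i < k) && (k < j) && (j < l)) || ((k < i) && (i < l) && (l < j)).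
Proof.
move=> hij hkl; apply/idP/idP.
  case/crossP => i' [j' [k' [l' [h1 h2 E1 E2]]]].
  by case: (set2_ltn_inj hij h1 E1) => -> ->; case: (set2_ltn_inj hkl h2 E2) => -> ->.
move=> h; apply/existsP; exists i; apply/existsP; exists j; apply/existsP; exists k.
by apply/existsP; exists l; rewrite !eqxx hij hkl h.
Qed.

Lemma crossC e f : cross e f = cross f e.
Proof.
apply/idP/idP => /crossP [i [j [k [l [hij hkl -> -> h]]]]];
by rewrite !crossE // orbC.
Qed.

Lemma cross_irrefl e : ~~ cross e e.
Proof.
apply/negP => /crossP [i [j [k [l [h1 h2 E1 E2 h]]]]].
by rewrite E1 in E2; case: (set2_ltn_inj h1 h2 E2) => <- <- in h; lia.
Qed.

Lemma in_nedge x y (k : 'I_N) : (k \in nedge N x y) = ((k : nat) == x) || ((k : nat) == y).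
Proof. by rewrite inE. Qed.

Lemma in_nedgeP x y (k : 'I_N) : k \in nedge N x y -> (k : nat) = x \/ (k : nat) = y.
Proof. by rewrite in_nedge => /orP [] /eqP ->; [left | right]. Qed.

Lemma nedgeE (i j : 'I_N) : nedge N i j = [set i; j].
Proof. by apply/setP => k; rewrite !inE. Qed.

Lemma nedgeC x y : nedge N x y = nedge N y x.
Proof. by apply/setP => k; rewrite !inE orbC. Qed.

Lemma nedge_ord x y (hx : x < N) (hy : y < N) : nedge N x y = [set Ordinal hx; Ordinal hy].
Proof. exact: (nedgeE (Ordinal hx) (Ordinal hy)). Qed.

Lemma is_edge_nedge x y : x < N -> y < N -> x != y -> is_edge (nedge N x y).
Proof.
move=> hx hy nxy; rewrite (nedge_ord hx hy) /is_edge cards2.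
suff -> : Ordinal hx != Ordinal hy by [].
by apply: contra nxy => /eqP [->].
Qed.

Lemma card_nedge_diag x : x < N -> #|nedge N x x| = 1.
Proof. by move=> hx; rewrite (nedge_ord hx hx) setUid cards1. Qed.

Lemma nedge_inj x y x' y' : x < y -> y < N -> x' < y' -> y' < N ->
  nedge N x y = nedge N x' y' -> x = x' /\ y = y'.
Proof.
move=> h1 h2 h3 h4.
rewrite (nedge_ord (ltn_trans h1 h2) h2) (nedge_ord (ltn_trans h3 h4) h4).
by case/set2_ltn_inj => // -[] -> [] ->.
Qed.

Lemma nedge_neq v a b : b < N -> b <> v -> b <> a -> nedge N v a != nedge N v b.
Proof.
move=> hb h1 h2; apply/eqP => E.
have : Ordinal hb \in nedge N v b by rewrite in_nedge eqxx orbT.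
by rewrite -E in_nedge /=; lia.
Qed.

Lemma cross_nedgeE x y k l : x < y -> y < N -> k < l -> l < N ->
  cross (nedge N x y) (nedge N k l) =
  ((x < k) && (k < y) && (y < l)) || ((k < x) && (x < l) && (l < y)).
Proof.
move=> h1 h2 h3 h4.
by rewrite (nedge_ord (ltn_trans h1 h2) h2) (nedge_ord (ltn_trans h3 h4) h4) crossE.
Qed.

Lemma cross_nedgeP x y f : x < y -> y < N -> cross (nedge N x y) f ->
  exists k l, [/\ k < l, l < N, f = nedge N k l &
     ((x < k) && (k < y) && (y < l)) || ((k < x) && (x < l) && (l < y))].
Proof.
move=> h1 h2 /crossP [i [j [k [l [hij hkl E1 E2 h]]]]].
rewrite -nedgeE in E1; case: (nedge_inj h1 h2 hij (ltn_ord j) E1) => -> ->.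
by exists k, l; rewrite E2 nedgeE.
Qed.

End Edges.

Definition ncross N (F : {set {set 'I_N}}) (e : {set 'I_N}) := #|[set f in F | cross e f]|.

Section TwoFactor.
Variables (N : nat) (F : {set {set 'I_N}}).
Hypothesis tfF : two_factor F.

Lemma card_two_factor : #|F| = N.
Proof.
case: tfF => He Hd.
have := double_count [set: 'I_N] F (fun v e => v \in e).
rewrite (eq_bigr (fun _ => 2)) => [|v _]; last exact: Hd.
rewrite sum_nat_const cardsT card_ord.
rewrite [X in _ = X](eq_bigr (fun _ => 2)) => [|e eF]; last first.
  rewrite (_ : [set x in [set: 'I_N] | x \in e] = e); first exact/eqP/He.
  by apply/setP => x; rewrite !inE.
by rewrite sum_nat_const; lia.
Qed.

Lemma two_factor_edge_partition (i j : 'I_N) : i < j -> [set i; j] \in F ->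
  N = 3 + ncross F [set i; j]
        + #|[set f in F | [&& i \notin f, j \notin f & ~~ cross [set i; j] f]]|.
Proof.
move=> hij eF; have [He Hd] := tfF.
have nij : i != j by rewrite neq_ltn hij.
rewrite -{1}card_two_factor (card_sepC F (fun f => (i \in f) || (j \in f))).
have -> : [set f in F | (i \in f) || (j \in f)] =
          [set f in F | i \in f] :|: [set f in F | j \in f].
  by apply/setP => f; rewrite !inE andb_orr.
rewrite cardsU !Hd.
have -> : [set f in F | i \in f] :&: [set f in F | j \in f] = [set [set i; j]].
  apply/setP => f; rewrite !inE; apply/idP/idP.
    by case/andP => /andP [fF fi] /andP [_ fj]; apply/eqP; apply: set2_edge (He _ fF) fi fj nij.
  by move/eqP ->; rewrite eF !inE !eqxx orbT.
have cross_avoids f : cross [set i; j] f -> (i \notin f) && (j \notin f).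
  case/crossP => i' [j' [k [l [h1 h2 E1 E2 h]]]].
  case: (set2_ltn_inj hij h1 E1) => ei ej; subst i' j'.
  by rewrite E2 !inE -!val_eqE; apply/andP; split; apply/negP => /orP [] /eqP; olia.
rewrite cards1 (card_sepC [set f in F | ~~ ((i \in f) || (j \in f))] (cross [set i; j])).
have -> : [set f in [set f in F | ~~ ((i \in f) || (j \in f))] | cross [set i; j] f] =
          [set f in F | cross [set i; j] f].
  apply/setP => f; rewrite !inE; case hc: (cross _ f); last by rewrite !andbF.
  by case/andP: (cross_avoids _ hc) => /negbTE -> /negbTE ->; rewrite ?andbT.
have -> : [set f in [set f in F | ~~ ((i \in f) || (j \in f))] | ~~ cross [set i; j] f] =
          [set f in F | [&& i \notin f, j \notin f & ~~ cross [set i; j] f]].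
  by apply/setP => f; rewrite !inE negb_or; case: (f \in F); case: (i \in f); case: (j \in f).
rewrite /ncross; lia.
Qed.

Lemma ncross_le_hitting e (A : {set 'I_N}) :
  (forall f, f \in F -> cross e f -> exists2 v, v \in A & v \in f) ->
  ncross F e <= 2 * #|A|.
Proof.
case: tfF => He Hd hA.
have := double_count A F (fun v f => v \in f).
rewrite (eq_bigr (fun _ => 2)) => [|v _]; last exact: Hd.
rewrite sum_nat_const mulnC => ->.
rewrite /ncross card_sep_sum; apply: leq_sum => f fF.
case hc: (cross e f) => //=.
by case: (hA f fF hc) => v vA vf; apply/card_gt0P; exists v; rewrite !inE vA vf.
Qed.

Lemma card_ord_inner x y : y < N -> #|[set v : 'I_N | (x < v) && (v < y)]| = y - x - 1.
Proof. by move=> hy; rewrite (card_ord_pred N (fun v => (x < v) && (v < y))) sum_nat_range; lia. Qed.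

Lemma card_ord_outer x y : x < y -> y < N ->
  #|[set v : 'I_N | (v < x) || (y < v)]| = x + (N - y - 1).
Proof.
move=> hxy hy; rewrite (card_ord_pred N (fun v => (v < x) || (y < v))).
rewrite (eq_big_nat _ _ (F2 := fun v =>
   ((0 <= v) && (v < x) : nat) + ((y.+1 <= v) && (v < N) : nat))).
  by rewrite big_split !sum_nat_range /=; lia.
by move=> v /andP [_ hv]; case: (ltnP v x) => h1; case: (ltnP y v) => h2 /=; rewrite ?hv /=; lia.
Qed.

Lemma ncross_le_sides x y : x < y -> y < N ->
  ncross F (nedge N x y) <= 2 * (y - x - 1) /\
  ncross F (nedge N x y) <= 2 * (x + (N - y - 1)).
Proof.
move=> hxy hy; split.
  rewrite -(card_ord_inner x hy); apply: ncross_le_hitting => f fF.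
  case/(cross_nedgeP hxy hy) => k [l [hkl hl -> h]].
  have hk : k < N by apply: ltn_trans hl.
  case/orP: h => /andP [/andP [h1 h2] h3].
    by exists (Ordinal hk); [rewrite inE /=; apply/andP; split; lia | rewrite in_nedge eqxx].
  by exists (Ordinal hl); [rewrite inE /=; apply/andP; split; lia | rewrite in_nedge eqxx orbT].
rewrite -(card_ord_outer hxy hy); apply: ncross_le_hitting => f fF.
case/(cross_nedgeP hxy hy) => k [l [hkl hl -> h]].
have hk : k < N by apply: ltn_trans hl.
case/orP: h => /andP [/andP [h1 h2] h3].
  by exists (Ordinal hl); [rewrite inE /=; apply/orP; right; lia | rewrite in_nedge eqxx orbT].
by exists (Ordinal hk); [rewrite inE /=; apply/orP; left; lia | rewrite in_nedge eqxx].
Qed.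

Lemma ncross_edge_bounds e : e \in F ->
  exists x y, [/\ x < y, y < N & e = nedge N x y] /\
    [/\ ncross F e + 3 <= N, ncross F e <= 2 * (y - x - 1)
      & ncross F e <= 2 * (x + (N - y - 1))].
Proof.
move=> eF; have [He _] := tfF.
case: (is_edgeP (He _ eF)) => i [j [hij E]].
have := two_factor_edge_partition hij; rewrite -E => /(_ eF) hp.
have [b1 b2] := ncross_le_sides hij (ltn_ord j).
rewrite nedgeE -E in b1 b2.
by exists i, j; rewrite nedgeE -E; split; split => //; lia.
Qed.

End TwoFactor.

Lemma crossings_double N (F : {set {set 'I_N}}) : 2 * crossings F = \sum_(e in F) ncross F e.
Proof.
set OP := [set p : {set 'I_N} * {set 'I_N} | [&& p.1 \in F, p.2 \in F & cross p.1 p.2]].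
have -> : \sum_(e in F) ncross F e = #|OP|.
  rewrite /ncross; under eq_bigr do rewrite -sum1dep_card.
  by rewrite pair_big_dep sum1dep_card.
set CP := [set P : {set {set 'I_N}} |
  [&& P \subset F, #|P| == 2 & [exists e in P, exists f in P, cross e f]]].
have := double_count CP OP (fun P p => P == [set p.1; p.2]).
rewrite (eq_bigr (fun _ => 2)) => [|P]; last first.
  rewrite inE => /and3P [sPF cP /existsP [e /andP [eP /existsP [f /andP [fP cef]]]]].
  have nef : e != f by apply: contraTneq cef => ->; exact: cross_irrefl.
  have PE : P = [set e; f].
    apply/eqP; rewrite eq_sym eqEcard cards2 nef (eqP cP) leqnn andbT.
    by apply/subsetP => g; rewrite !inE => /orP [] /eqP ->.
  have eF : e \in F := subsetP sPF e eP.
  have fF : f \in F := subsetP sPF f fP.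
  rewrite (_ : [set p in OP | P == [set p.1; p.2]] = [set (e, f); (f, e)]).
    by rewrite cards2 xpair_eqE negb_and nef.
  apply/setP => -[a b]; rewrite !inE /= PE; apply/idP/idP.
    case/andP => /and3P [aF bF cab] /eqP E.
    have ab : a != b by apply: contraTneq cab => ->; exact: cross_irrefl.
    have : a \in [set e; f] by rewrite E !inE eqxx.
    have : b \in [set e; f] by rewrite E !inE eqxx orbT.
    move: ab; rewrite !inE !xpair_eqE => ab /orP [] /eqP eb /orP [] /eqP ea; subst a b;
      rewrite ?eqxx ?orbT ?andbT //=; by rewrite eqxx in ab.
  case/orP => /eqP [-> ->]; rewrite eF fF ?(crossC f e) cef /= ?eqxx //.
  by rewrite setUC eqxx.
rewrite sum_nat_const => H; rewrite /crossings -/CP mulnC H.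
rewrite (eq_bigr (fun _ => 1)) => [|p]; last first.
  rewrite inE => /and3P [aF bF cab].
  rewrite (_ : [set P in CP | P == [set p.1; p.2]] = [set [set p.1; p.2]]) ?cards1 //.
  apply/setP => P; rewrite !inE; case: (P =P [set p.1; p.2]) => [->|]; rewrite ?andbF ?andbT //.
  have ab : p.1 != p.2 by apply: contraTneq cab => ->; exact: cross_irrefl.
  rewrite cards2 ab /=; apply/andP; split.
    by apply/subsetP => g; rewrite !inE => /orP [] /eqP ->.
  apply/existsP; exists p.1; rewrite !inE eqxx /=.
  by apply/existsP; exists p.2; rewrite !inE eqxx orbT.
by rewrite sum_nat_const muln1.
Qed.

Definition diameter N (e : {set 'I_N}) :=
  [exists i : 'I_N, (i < N %/ 2) && (e == nedge N i (i + N %/ 2))].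

Section UpperBound.
Variables (N m : nat).
Hypothesis N_eq : N = 4 * m.

Lemma diameter_nedge x y : x < y -> y < N -> diameter (nedge N x y) = (y == x + N %/ 2).
Proof.
move=> hxy hy; apply/idP/idP.
  case/existsP => i /andP [hi /eqP E].
  have h2 : i + N %/ 2 < N by lia.
  by case: (nedge_inj hxy hy _ h2 E) => [|-> ->]; [lia | rewrite eqxx].
move/eqP => ey; apply/existsP; exists (Ordinal (ltn_trans hxy hy)).
by rewrite /= -ey eqxx andbT; lia.
Qed.

Lemma card_lower_half : #|[set v : 'I_N | v < N %/ 2]| = N %/ 2.
Proof.
rewrite (card_ord_pred N (fun v => v < N %/ 2)).
by rewrite (eq_bigr (fun v => ((0 <= v) && (v < N %/ 2) : nat))) // sum_nat_range; lia.
Qed.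

Implicit Type F : {set {set 'I_N}}.

(* A diameter is counted once, at its endpoint in the lower half. *)
Lemma card_diameters F :
  #|[set e in F | diameter e]| =
  \sum_(v in [set v : 'I_N | v < N %/ 2]) #|[set e in [set e in F | diameter e] | v \in e]|.
Proof.
rewrite double_count -sum1_card; apply: eq_bigr => e; rewrite !inE => /andP [eF].
case/existsP => i /andP [hi /eqP ->].
rewrite (_ : [set v in [set v : 'I_N | v < N %/ 2] | v \in nedge N i (i + N %/ 2)] =
             nedge N i i); first by rewrite card_nedge_diag.
apply/setP => v; rewrite !inE; apply/idP/idP.
  by case/andP => h /orP [] /eqP hv; fold_ord_val; rewrite hv ?eqxx //; lia.
by rewrite orbb => /eqP hv; fold_ord_val; rewrite hv eqxx andbT; lia.
Qed.

Lemma diameters_at F (v : 'I_N) : v < N %/ 2 ->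
  #|[set e in [set e in F | diameter e] | v \in e]| <= 1 /\
  (0 < #|[set e in [set e in F | diameter e] | v \in e]| -> nedge N v (v + N %/ 2) \in F).
Proof.
move=> hv.
have at_v e : e \in [set e in [set e in F | diameter e] | v \in e] ->
    e = nedge N v (v + N %/ 2) /\ e \in F.
  rewrite !inE => /andP [/andP [eF /existsP [i /andP [hi /eqP E]]] ve].
  move: ve; rewrite E => /in_nedgeP [] hvi; last lia.
  by rewrite -hvi; split => //; rewrite hvi -E.
split; last by case/card_gt0P => e /at_v [<-].
rewrite -(cards1 (nedge N v (v + N %/ 2))); apply: subset_leq_card.
by apply/subsetP => e /at_v [-> _]; rewrite inE.
Qed.

Lemma card_diameters_le F : #|[set e in F | diameter e]| <= N %/ 2.
Proof.
rewrite card_diameters -{2}card_lower_half -sum1_card; apply: leq_sum => v.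
by rewrite inE => hv; case: (diameters_at F hv).
Qed.

Lemma all_diameters F : #|[set e in F | diameter e]| = N %/ 2 ->
  forall v, v < N %/ 2 -> nedge N v (v + N %/ 2) \in F.
Proof.
move=> hD v hv; have hvN : v < N by lia.
set w := Ordinal hvN; have hw : w < N %/ 2 by [].
case: (diameters_at F hw) => _; apply.
rewrite lt0n; apply/negP => /eqP t0.
have := card_diameters F; rewrite hD => E.
set A := [set v : 'I_N | v < N %/ 2] in E.
have : \sum_(u in A) (#|[set e in [set e in F | diameter e] | u \in e]| + (u == w : nat))
       <= \sum_(u in A) 1.
  apply: leq_sum => u uA; case: (u =P w) => [->|_]; first by rewrite t0.
  by rewrite addn0; case: (diameters_at F (_ : u < N %/ 2)) => //; rewrite inE in uA.
rewrite big_split /= -E sum1_card card_lower_half -(card_sep_sum A (fun u => u == w)).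
rewrite (_ : [set u in A | u == w] = [set w]) ?cards1; first lia.
by apply/setP => u; rewrite !inE; case: (u =P w) => [->|]; rewrite ?andbT ?andbF.
Qed.

Lemma ncross_diameter_bound F e : two_factor F -> e \in F ->
  ncross F e + (~~ diameter e : nat) <= N - 3 /\
  (~~ diameter e -> ncross F e + 1 = N - 3 ->
     exists x y, [/\ x < y, y < N, e = nedge N x y &
        (y = x + N %/ 2 + 1) \/ (y + 1 = x + N %/ 2)]).
Proof.
move=> tfF eF; case: (ncross_edge_bounds tfF eF) => x [y [[hxy hy E] [h3 b1 b2]]].
subst e; rewrite (diameter_nedge hxy hy).
case: (y =P x + N %/ 2) => [hd|hd] /=; split => //; try lia.
by move=> _ h; exists x, y; split => //; lia.
Qed.

Lemma sum_ncross_diameter F :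
  \sum_(e in F) (ncross F e + (~~ diameter e : nat)) =
  2 * crossings F + #|[set e in F | ~~ diameter e]|.
Proof. by rewrite big_split /= -crossings_double card_sep_sum. Qed.

Lemma crossings_ub F : two_factor F -> 2 * crossings F + N %/ 2 <= N * (N - 3).
Proof.
move=> tfF.
have : \sum_(e in F) (ncross F e + (~~ diameter e : nat)) <= \sum_(e in F) (N - 3).
  by apply: leq_sum => e eF; case: (ncross_diameter_bound tfF eF).
rewrite sum_ncross_diameter sum_nat_const (card_two_factor tfF).
have := card_sepC F (@diameter N); rewrite (card_two_factor tfF).
have := card_diameters_le F; lia.
Qed.

Lemma crossings_ub_eq F : two_factor F -> 2 * crossings F + N %/ 2 = N * (N - 3) ->
  (forall v, v < N %/ 2 -> nedge N v (v + N %/ 2) \in F) /\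
  (forall e, e \in F -> ~~ diameter e -> exists x y, [/\ x < y, y < N, e = nedge N x y &
        (y = x + N %/ 2 + 1) \/ (y + 1 = x + N %/ 2)]).
Proof.
move=> tfF heq.
have hle e : e \in F -> ncross F e + (~~ diameter e : nat) <= N - 3.
  by move=> eF; case: (ncross_diameter_bound tfF eF).
have hsum : \sum_(e in F) ((N - 3) - (ncross F e + (~~ diameter e : nat))) =
            \sum_(e in F) (N - 3) - \sum_(e in F) (ncross F e + (~~ diameter e : nat)).
  by rewrite sumnB.
rewrite sum_nat_const (card_two_factor tfF) sum_ncross_diameter in hsum.
have hsplit := card_sepC F (@diameter N); rewrite (card_two_factor tfF) in hsplit.
have hdle := card_diameters_le F.
have hd : #|[set e in F | diameter e]| = N %/ 2.
  have : \sum_(e in F) (ncross F e + (~~ diameter e : nat)) <= \sum_(e in F) (N - 3).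
    exact: leq_sum.
  rewrite sum_ncross_diameter sum_nat_const (card_two_factor tfF); lia.
split; first exact: all_diameters.
have /eqP : \sum_(e in F) ((N - 3) - (ncross F e + (~~ diameter e : nat))) = 0.
  by rewrite hsum; lia.
rewrite sum_nat_eq0 => /forallP h0 e eF nd.
have := h0 e; rewrite eF /= => /eqP h.
case: (ncross_diameter_bound tfF eF) => hh; apply => //; move: hh h; rewrite nd /=; lia.
Qed.

End UpperBound.

(* (v + N/2 + 1) mod N and (v + N/2 - 1) mod N for v < N, written without [%%]
   so that [lia] can reason about them after a case split. *)
Definition succ_antipode N v :=
  if v + N %/ 2 + 1 < N then v + N %/ 2 + 1 else v + N %/ 2 + 1 - N.
Definition pred_antipode N v :=
  if v + N %/ 2 - 1 < N then v + N %/ 2 - 1 else v + N %/ 2 - 1 - N.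

(* h1 and h2 edge by edge: all diameters, and from each vertex x the edge to the
   successor or to the predecessor of its antipode, according as x has parity q
   or not. *)
Definition hstar N q : {set {set 'I_N}} := [set e : {set 'I_N} | [exists x : 'I_N,
   [|| (x < N %/ 2) && (e == nedge N x (x + N %/ 2)),
       (x %% 2 == q) && (e == nedge N x (succ_antipode N x)) |
       (x %% 2 != q) && (e == nedge N x (pred_antipode N x))]]].

Ltac case_antipode_go := match goal with
 | H : context [if _ then _ else _] |- _ => revert H; case_antipode_go
 | |- context [if _ then _ else _] => case: ifP => ?; case_antipode_go
 | _ => intros
end.
Ltac case_antipode := unfold succ_antipode, pred_antipode in *; case_antipode_go.

Ltac solve_nedge := case_antipode; first
  [ exfalso; olia
  | apply: f_equal2; olia
  | rewrite nedgeC; apply: f_equal2; olia ].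

Section HStar.
Variables (N m q : nat).

Lemma hstarP e : e \in hstar N q -> exists x, x < N /\
  [\/ x < N %/ 2 /\ e = nedge N x (x + N %/ 2),
      x %% 2 = q /\ e = nedge N x (succ_antipode N x) |
      x %% 2 <> q /\ e = nedge N x (pred_antipode N x)].
Proof.
rewrite inE => /existsP [x /or3P [] /andP [h /eqP ->]]; exists x; split => //.
- by constructor 1.
- by constructor 2; split => //; apply/eqP.
- by constructor 3; split => //; apply/eqP.
Qed.

Lemma hstar_diameter x : x < N %/ 2 -> nedge N x (x + N %/ 2) \in hstar N q.
Proof.
move=> hx; have hxN : x < N by lia.
by rewrite inE; apply/existsP; exists (Ordinal hxN); rewrite /= hx eqxx.
Qed.

Lemma hstar_succ x : x < N -> x %% 2 = q -> nedge N x (succ_antipode N x) \in hstar N q.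
Proof.
by move=> hx hq; rewrite inE; apply/existsP; exists (Ordinal hx); rewrite /= hq !eqxx orbT.
Qed.

Lemma hstar_pred x : x < N -> x %% 2 <> q -> nedge N x (pred_antipode N x) \in hstar N q.
Proof.
move=> hx /eqP/negbTE hq; rewrite inE; apply/existsP; exists (Ordinal hx) => /=.
by rewrite hq !eqxx !orbT.
Qed.

Lemma hstar_diameter_sym x a b : x < N %/ 2 ->
  (a = x /\ b = x + N %/ 2) \/ (a = x + N %/ 2 /\ b = x) -> nedge N a b \in hstar N q.
Proof. by move=> hx [[-> ->]|[-> ->]]; rewrite ?(nedgeC N (x + _)) hstar_diameter. Qed.

Lemma hstar_succ_sym x a b : x < N -> x %% 2 = q ->
  (a = x /\ b = succ_antipode N x) \/ (a = succ_antipode N x /\ b = x) ->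
  nedge N a b \in hstar N q.
Proof. by move=> hx hq [[-> ->]|[-> ->]]; rewrite ?(nedgeC N (succ_antipode N x)) hstar_succ. Qed.

Lemma hstar_pred_sym x a b : x < N -> x %% 2 <> q ->
  (a = x /\ b = pred_antipode N x) \/ (a = pred_antipode N x /\ b = x) ->
  nedge N a b \in hstar N q.
Proof. by move=> hx hq [[-> ->]|[-> ->]]; rewrite ?(nedgeC N (pred_antipode N x)) hstar_pred. Qed.

Hypotheses (N_eq : N = 4 * m) (m_gt0 : 0 < m).

Lemma hstar_edge_len e : e \in hstar N q ->
  exists k l, [/\ k < l, l < N, e = nedge N k l &
     [\/ l = k + N %/ 2, l = k + N %/ 2 + 1 | l + 1 = k + N %/ 2]].
Proof.
move=> /hstarP [x [hx [[h ->]|[h ->]|[h ->]]]].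
- by exists x, (x + N %/ 2); split; [lia | lia | done | constructor 1].
- rewrite /succ_antipode; case: ifP => c.
    by exists x, (x + N %/ 2 + 1); split; [lia | lia | done | constructor 2].
  exists (x + N %/ 2 + 1 - N), x; rewrite nedgeC; split; [lia | lia | done | constructor 3; lia].
- rewrite /pred_antipode; case: ifP => c.
    by exists x, (x + N %/ 2 - 1); split; [lia | lia | done | constructor 3; lia].
  exists (x + N %/ 2 - 1 - N), x; rewrite nedgeC; split; [lia | lia | done | constructor 2; lia].
Qed.

Hypothesis q_lt2 : q < 2.

Lemma hstar_at (v : 'I_N) :
  [set f in hstar N q | v \in f] =
  [set (if v < N %/ 2 then nedge N v (v + N %/ 2) else nedge N (v - N %/ 2) v);
       (if v %% 2 == q then nedge N v (succ_antipode N v) else nedge N v (pred_antipode N v))].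
Proof.
have hv := ltn_ord v.
apply/setP => f; rewrite inE in_set2; apply/idP/idP.
  case/andP => /hstarP [x [hx [[h1 ->]|[h1 ->]|[h1 ->]]]] /in_nedgeP [] e1;
  by apply/orP; first [left; apply/eqP; solve_nedge | right; apply/eqP; solve_nedge].
case/orP => /eqP ->.
  case: ifP => c; first by rewrite hstar_diameter // in_nedge eqxx.
  rewrite in_nedge eqxx orbT andbT.
  rewrite (_ : nedge N (v - N %/ 2) v = nedge N (v - N %/ 2) (v - N %/ 2 + N %/ 2)).
    by apply: hstar_diameter; lia.
  by apply: f_equal2; lia.
case: ifP => c; rewrite in_nedge eqxx andbT; first by apply: hstar_succ => //; apply/eqP.
by apply: hstar_pred => //; apply/eqP; rewrite c.
Qed.

Lemma two_factor_hstar : two_factor (hstar N q).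
Proof.
split.
  by move=> e /hstar_edge_len [k [l [hkl hl -> _]]]; apply: is_edge_nedge; lia.
move=> v; rewrite hstar_at cards2.
set D := (if _ then _ else _); set O := (if _ then _ else _).
suff -> : D != O by [].
have hv := ltn_ord v.
have [w hw Ew] : exists2 w, w < N & w = (if v < N %/ 2 then v + N %/ 2 else v - N %/ 2).
  by exists (if v < N %/ 2 then v + N %/ 2 else v - N %/ 2) => //; case: ifP; lia.
apply/negP => /eqP E.
have : Ordinal hw \in D by rewrite /D; case: ifP => c; rewrite in_nedge /= Ew c eqxx ?orbT.
rewrite E /O; case: ifP => c1; rewrite in_nedge /= Ew => H;
  case_antipode; case/orP: H => /eqP ?; olia.
Qed.

End HStar.

Lemma noncross_disjoint_cases i j k l : i < j -> k < l ->
  i <> k -> i <> l -> j <> k -> j <> l ->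
  ~~ (((i < k) && (k < j) && (j < l)) || ((k < i) && (i < l) && (l < j))) ->
  [\/ i < k /\ l < j, l < i, j < k | k < i /\ j < l].
Proof.
move=> h1 h2 h3 h4 h5 h6 h7.
case: (ltngtP i k) => a; last lia; case: (ltngtP i l) => b; try lia;
case: (ltngtP j k) => c; try lia; case: (ltngtP j l) => d; try lia.
all: try (constructor 1; lia); try (constructor 2; lia); try (constructor 3; lia);
  try (constructor 4; lia).
all: by exfalso; move: h7; rewrite ?a ?b ?c ?d /=; lia.
Qed.

Section LowerBound.
Variables (N m q : nat).
Hypotheses (N_eq : N = 4 * m) (m_gt0 : 0 < m).

Lemma hstar_parallelP (i j : 'I_N) f : i < j ->
  f \in [set f in hstar N q | [&& i \notin f, j \notin f & ~~ cross [set i; j] f]] ->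
  exists k l, [/\ k < l, l < N, f = nedge N k l,
     [\/ l = k + N %/ 2, l = k + N %/ 2 + 1 | l + 1 = k + N %/ 2] &
     [\/ i < k /\ l < j, l < i, j < k | k < i /\ j < l]].
Proof.
move=> hij; rewrite inE => /andP [/(hstar_edge_len N_eq m_gt0) [k [l [hkl hl E hlen]]]].
rewrite E -nedgeE (cross_nedgeE hij (ltn_ord j) hkl hl) !in_nedge => /and3P [h1 h2 h3].
by exists k, l; split => //; apply: noncross_disjoint_cases => //; lia.
Qed.

(* Edges of hstar have length about N/2, so at most one of them can run beside a
   non-diameter of hstar without meeting or crossing it, and none beside a diameter. *)
Lemma card_hstar_parallel_le (i j : 'I_N) : i < j -> [set i; j] \in hstar N q ->
  #|[set f in hstar N q | [&& i \notin f, j \notin f & ~~ cross [set i; j] f]]|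
    <= ((j : nat) != i + N %/ 2).
Proof.
move=> hij eH; have eH' : nedge N i j \in hstar N q by rewrite nedgeE.
have [x [y [hxy hy E hlen]]] := hstar_edge_len N_eq m_gt0 eH'.
case: (nedge_inj hij (ltn_ord j) hxy hy E) => ex ey.
have half : N %/ 2 = 2 * m by lia.
rewrite half -ex -ey in hlen *.
case: ((j : nat) =P i + 2 * m) => hd /=.
  rewrite leqn0 cards_eq0; apply/eqP/setP => f; rewrite in_set0.
  apply/negP => /(hstar_parallelP hij) [k [l [hkl hl _ hl2 side]]].
  by rewrite half in hl2; case: side; case: hl2; lia.
apply/card_le1_eqP => f g /(hstar_parallelP hij) [k [l [hkl hl -> hl2 s1]]]
  /(hstar_parallelP hij) [k' [l' [hkl' hl' -> hl2' s2]]].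
rewrite half in hl2 hl2'.
by apply: f_equal2; case: s1; case: s2; case: hl2; case: hl2'; case: hlen; lia.
Qed.

Lemma card_hstar_diameters : N %/ 2 <= #|[set e in hstar N q | diameter e]|.
Proof.
rewrite (card_diameters N_eq) -{1}(card_lower_half N_eq) -sum1_card.
apply: leq_sum => v; rewrite inE => hv; apply/card_gt0P; exists (nedge N v (v + N %/ 2)).
apply/setIdP; split; last by rewrite in_nedge eqxx.
apply/setIdP; split; first exact: hstar_diameter.
by rewrite (diameter_nedge N_eq _ (_ : v + N %/ 2 < N)) ?eqxx //; lia.
Qed.

Lemma crossings_hstar_lb : q < 2 -> N * (N - 3) <= 2 * crossings (hstar N q) + N %/ 2.
Proof.
move=> q_lt2; have tfH := two_factor_hstar N_eq m_gt0 q_lt2.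
have : \sum_(e in hstar N q) (N - 3) <=
       \sum_(e in hstar N q) (ncross (hstar N q) e + (~~ diameter e : nat)).
  apply: leq_sum => e eH; have [He _] := tfH.
  case: (is_edgeP (He _ eH)) => i [j [hij E]]; rewrite E in eH.
  have := two_factor_edge_partition tfH hij eH.
  have := card_hstar_parallel_le hij eH.
  by rewrite E -nedgeE (diameter_nedge N_eq hij (ltn_ord j)) nedgeE; lia.
rewrite sum_ncross_diameter sum_nat_const (card_two_factor tfH).
have := card_sepC (hstar N q) (@diameter N); rewrite (card_two_factor tfH).
have := card_hstar_diameters; lia.
Qed.

End LowerBound.

Section Cycles.
Variables (N m : nat).
Hypotheses (N_eq : N = 4 * m) (m_gt0 : 0 < m).

Lemma mem_h1 b e : b < m ->
  [|| e == nedge N (2 * b) (2 * b + N %/ 2),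
      e == nedge N (2 * b + N %/ 2) (2 * b + 1),
      e == nedge N (2 * b + 1) (2 * b + N %/ 2 + 1) |
      e == nedge N (2 * b + N %/ 2 + 1) (2 * b)] ->
  e \in h1 N.
Proof.
move=> hb h; have hb' : b < N %/ 4 by lia.
by apply/bigcupP; exists (Ordinal hb'); rewrite // /cyc4 !inE /= -!orbA.
Qed.

Lemma h2_wrap_index b : b < m ->
  (2 * b + N - 1) %% N = if b == 0 then N - 1 else 2 * b - 1.
Proof.
move=> hb; case: ifP => /eqP h; first by rewrite h modn_small; lia.
by rewrite (_ : 2 * b + N - 1 = (2 * b - 1) + N) ?modnDr ?modn_small; lia.
Qed.

Lemma mem_h2 b e : b < m ->
  [|| e == nedge N (2 * b) (2 * b + N %/ 2),
      e == nedge N (2 * b + N %/ 2) (if b == 0 then N - 1 else 2 * b - 1),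
      e == nedge N (if b == 0 then N - 1 else 2 * b - 1) (2 * b + N %/ 2 - 1) |
      e == nedge N (2 * b + N %/ 2 - 1) (2 * b)] ->
  e \in h2 N.
Proof.
move=> hb h; have hb' : b < N %/ 4 by lia.
by apply/bigcupP; exists (Ordinal hb'); rewrite // /cyc4 /= (h2_wrap_index hb) !inE -!orbA.
Qed.

Ltac solve_cycle_edge :=
  apply/or4P; first [ constructor 1; apply/eqP; solve_nedge
                    | constructor 2; apply/eqP; solve_nedge
                    | constructor 3; apply/eqP; solve_nedge
                    | constructor 4; apply/eqP; solve_nedge ].

Lemma h1_hstar : h1 N = hstar N 0.
Proof.
apply/setP => e; apply/idP/idP.
  case/bigcupP => b _; have hb : b < m by have := ltn_ord b; lia.
  rewrite /cyc4 => H; rewrite !inE -!orbA in H; case/or4P: H => /eqP ->.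
  - by apply: (@hstar_diameter_sym N 0 (2 * b)); lia.
  - by apply: (@hstar_succ_sym N 0 (2 * b + N %/ 2)); [lia | lia | case_antipode; lia].
  - by apply: (@hstar_diameter_sym N 0 (2 * b + 1)); lia.
  - by apply: (@hstar_succ_sym N 0 (2 * b)); [lia | lia | case_antipode; lia].
case/hstarP => x [hx H].
apply: (@mem_h1 ((if x < N %/ 2 then x else x - N %/ 2) %/ 2)); first by case_antipode; lia.
case: ifP => cx; have [par|par] : x %% 2 = 0 \/ x %% 2 = 1 by lia.
all: by case: H => [[h ->]|[h ->]|[h ->]]; solve_cycle_edge.
Qed.

Lemma h2_hstar : h2 N = hstar N 1.
Proof.
apply/setP => e; apply/idP/idP.
  case/bigcupP => b _; have hb : b < m by have := ltn_ord b; lia.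
  rewrite /cyc4 /= (h2_wrap_index hb) => H; rewrite !inE -!orbA in H.
  case/or4P: H => /eqP ->.
  - by apply: (@hstar_diameter_sym N 1 (2 * b)); lia.
  - by apply: (@hstar_pred_sym N 1 (2 * b + N %/ 2)); [lia | lia | case_antipode; lia].
  - by apply: (@hstar_diameter_sym N 1 (if (b : nat) == 0 then N %/ 2 - 1 else 2 * b - 1));
      case_antipode; lia.
  - by apply: (@hstar_pred_sym N 1 (2 * b)); [lia | lia | case_antipode; lia].
case/hstarP => x [hx H].
pose y := if x < N %/ 2 then x else x - N %/ 2.
apply: (@mem_h2 (if (y + 1) %/ 2 < m then (y + 1) %/ 2 else 0)); first by rewrite /y; case_antipode; lia.
rewrite /y; have [par|par] : x %% 2 = 0 \/ x %% 2 = 1 by lia.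
all: by case: H => [[h ->]|[h ->]|[h ->]]; case_antipode; solve_cycle_edge.
Qed.

End Cycles.

Section Extremal.
Variables (N m : nat) (F : {set {set 'I_N}}).
Hypotheses (N_eq : N = 4 * m) (m_gt0 : 0 < m) (tfF : two_factor F)
  (F_extremal : 2 * crossings F + N %/ 2 = N * (N - 3)).

Let antipode v := if v < N %/ 2 then v + N %/ 2 else v - N %/ 2.

Lemma diameter_in_extremal v : v < N -> nedge N v (antipode v) \in F.
Proof.
have [diamF _] := crossings_ub_eq N_eq tfF F_extremal.
move=> hv; rewrite /antipode; case: ifP => c; first exact: diamF.
rewrite nedgeC (_ : nedge N (v - N %/ 2) v = nedge N (v - N %/ 2) (v - N %/ 2 + N %/ 2)).
  by apply: diamF; lia.
by apply: f_equal2; lia.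
Qed.

Lemma succ_or_pred_in_extremal v : v < N ->
  nedge N v (succ_antipode N v) \in F \/ nedge N v (pred_antipode N v) \in F.
Proof.
move=> hv; have [_ nondiamF] := crossings_ub_eq N_eq tfF F_extremal.
have [He Hd] := tfF.
set D := nedge N v (antipode v).
have [f fS fD] : exists2 f, f \in [set f in F | Ordinal hv \in f] & f != D.
  case: (boolP [exists f in [set f in F | Ordinal hv \in f], f != D]) => [/exists_inP //|].
  move/exists_inPn => onlyD.
  have : #|[set f in F | Ordinal hv \in f]| <= 1.
    rewrite -(cards1 D); apply: subset_leq_card; apply/subsetP => f fS.
    by have := onlyD f fS; rewrite negbK inE.
  by rewrite Hd.
move: fS; rewrite inE => /andP [fF vf].
case: (boolP (diameter f)) => [/existsP [i /andP [hi /eqP E]] | nd].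
  move: fD vf; rewrite E in_nedge /= => /negP fD vf; case: fD.
  by apply/eqP; rewrite /D /antipode; case_antipode;
    first [apply: f_equal2; lia | rewrite nedgeC; apply: f_equal2; lia].
case: (nondiamF f fF nd) => x [y [hxy hy E hl]].
move: vf; rewrite E in_nedge /= => vf.
have : f = nedge N v (succ_antipode N v) \/ f = nedge N v (pred_antipode N v).
  by rewrite E; case/orP: vf => /eqP vx; case: hl => hl;
    first [left; solve_nedge | right; solve_nedge].
by case => <-; [left | right].
Qed.

Lemma succ_pred_not_both_in_extremal v : v < N ->
  nedge N v (succ_antipode N v) \in F -> nedge N v (pred_antipode N v) \in F -> False.
Proof.
move=> hv hs hp; have [_ Hd] := tfF.
have hw : antipode v < N by rewrite /antipode; case: ifP; lia.
have hsN : succ_antipode N v < N by case_antipode; lia.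
have hpN : pred_antipode N v < N by case_antipode; lia.
have n1 : nedge N v (antipode v) != nedge N v (succ_antipode N v).
  by apply: nedge_neq => //; rewrite /antipode; case_antipode; lia.
have n2 : nedge N v (antipode v) != nedge N v (pred_antipode N v).
  by apply: nedge_neq => //; rewrite /antipode; case_antipode; lia.
have n3 : nedge N v (succ_antipode N v) != nedge N v (pred_antipode N v).
  by apply: nedge_neq => //; case_antipode; lia.
have : #|nedge N v (antipode v) |: [set nedge N v (succ_antipode N v);
                                       nedge N v (pred_antipode N v)]|
       <= #|[set f in F | Ordinal hv \in f]|.
  apply: subset_leq_card; apply/subsetP => f; rewrite !inE => /or3P [] /eqP ->;
  by rewrite ?diameter_in_extremal ?hs ?hp //= in_nedge eqxx.
by rewrite Hd cardsU1 cards2 !inE negb_or n1 n2 n3.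
Qed.

Let succ_chosen v := nedge N v (succ_antipode N v) \in F.

(* Seen from its other end, the edge from v to the successor of its antipode
   goes to the predecessor of the antipode. *)
Lemma succ_chosen_succ_antipode v : v < N ->
  succ_chosen (succ_antipode N v) = ~~ succ_chosen v.
Proof.
move=> hv; have hs : succ_antipode N v < N by case_antipode; lia.
have flip : nedge N (succ_antipode N v) (pred_antipode N (succ_antipode N v)) =
            nedge N v (succ_antipode N v).
  by rewrite nedgeC; apply: f_equal2 => //; case_antipode; lia.
apply/idP/idP => [h | h].
  by apply/negP => h2; apply: (succ_pred_not_both_in_extremal hs h); rewrite flip.
case: (succ_or_pred_in_extremal hs) => // h2.
by rewrite flip in h2; move: h; rewrite /succ_chosen h2.
Qed.

Lemma succ_chosen_add2 v : v + 2 < N -> succ_chosen (v + 2) = succ_chosen v.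
Proof.
move=> hv; have hv' : v < N by lia.
have hs : succ_antipode N v < N by case_antipode; lia.
rewrite (_ : v + 2 = succ_antipode N (succ_antipode N v)); last by case_antipode; lia.
by rewrite !succ_chosen_succ_antipode // negbK.
Qed.

Lemma succ_chosen_parity v : v < N ->
  succ_chosen v = (v %% 2 == if succ_chosen 0 then 0 else 1).
Proof.
have shift k r : 2 * k + r < N -> succ_chosen (2 * k + r) = succ_chosen r.
  elim: k => [|k IH] h; first by rewrite muln0.
  by rewrite (_ : 2 * k.+1 + r = 2 * k + r + 2) ?succ_chosen_add2 ?IH //; lia.
have one : succ_chosen 1 = ~~ succ_chosen 0.
  rewrite -succ_chosen_succ_antipode; last lia.
  rewrite (_ : succ_antipode N 0 = 2 * m + 1) ?shift //; case_antipode; lia.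
move=> hv; rewrite {1}(divn_eq v 2) mulnC shift; last by rewrite mulnC -divn_eq.
have [->|->] : v %% 2 = 0 \/ v %% 2 = 1 by lia.
  by case: (succ_chosen 0).
by rewrite one; case: (succ_chosen 0).
Qed.

Lemma extremal_hstar : F = hstar N 0 \/ F = hstar N 1.
Proof.
have [diamF nondiamF] := crossings_ub_eq N_eq tfF F_extremal.
set q := if succ_chosen 0 then 0 else 1.
have qP v : v < N -> succ_chosen v = (v %% 2 == q) by exact: succ_chosen_parity.
suff FH : F \subset hstar N q.
  have -> : F = hstar N q.
    have tfH : two_factor (hstar N q) by apply: (two_factor_hstar N_eq m_gt0); rewrite /q; case: ifP.
    by apply/eqP; rewrite eqEcard FH (card_two_factor tfF) (card_two_factor tfH) leqnn.
  by rewrite /q; case: ifP; [left | right].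
apply/subsetP => e eF; case: (boolP (diameter e)) => [/existsP [i /andP [hi /eqP ->]] | nd].
  exact: hstar_diameter.
case: (nondiamF e eF nd) => x [y [hxy hy E [hl|hl]]]; have hxN : x < N by lia.
  have ey : y = succ_antipode N x by case_antipode; lia.
  rewrite E ey; apply: hstar_succ => //; apply/eqP; rewrite -qP //.
  by rewrite /succ_chosen -ey -E.
have ey : y = pred_antipode N x by case_antipode; lia.
rewrite E ey; apply: hstar_pred => //; apply/eqP; rewrite -qP //.
by apply/negP => h; apply: (succ_pred_not_both_in_extremal hxN h); rewrite -ey -E.
Qed.

End Extremal.

Import Order.TTheory GRing.Theory Num.Theory.

Theorem propositionB1 (N : nat) (HN4 : 4 <= N) (HNdiv : 4 %| N)
    (R : realFieldType) (r : 'I_N -> R)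
    (hr0 : forall i, (0 <= r i)%R) (hr1 : forall i, (r i <= 1)%R)
    (hr : forall i j : 'I_N, i < j -> (r i < r j)%R)
    (F : {set {set 'I_N}}) :
  (two_factor F /\ (forall G : {set {set 'I_N}}, two_factor G -> crossings G <= crossings F)) <->
  (F = h1 N \/ F = h2 N).
Proof.
have [m N_eq] : exists m, N = 4 * m by case/dvdnP: HNdiv => m ->; exists m; rewrite mulnC.
have m_gt0 : 0 < m by lia.
have hstar_optimal q : q < 2 -> two_factor (hstar N q) /\
    forall G : {set {set 'I_N}}, two_factor G -> crossings G <= crossings (hstar N q).
  move=> q_lt2; split; first exact: two_factor_hstar N_eq m_gt0 q_lt2.
  move=> G tfG; have := crossings_ub N_eq tfG.
  by have := crossings_hstar_lb N_eq m_gt0 q_lt2; lia.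
rewrite (h1_hstar N_eq m_gt0) (h2_hstar N_eq m_gt0); split; last by case=> ->; apply: hstar_optimal.
case=> tfF Fmax; apply: (extremal_hstar N_eq m_gt0 tfF).
have [tfH _] := hstar_optimal 0 isT; have := Fmax _ tfH.
have := crossings_ub N_eq tfF; have := crossings_hstar_lb N_eq m_gt0 (isT : 0 < 2); lia.
Qed.
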